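(* Let $\mathcal{A}$ be a Boolean algebra, let $(Z_n)_{n\in\omega}$ be a proper $\mathcal{R}$-filtration of $\mathcal{A}$, and let $f:\mathcal{A}\to\omega$ be given by $f(x) = \min\{n : x \in Z_n\}$. Then there exists a sequence $(a_n)_{n\in\omega}$ in $\mathcal{A}$ such that $a_n \wedge a_m = 0$ whenever $m \neq n$ and $f(a_0) < f(a_1) < f(a_2) < \cdots$.
   Context: For a subset $Z$ of a Boolean algebra, $\mathcal{R}(Z) = Z \cup \{0,1\} \cup \{x^c : x \in Z\} \cup \{x\vee y : x,y\in Z\} \cup \{x\wedge y : x,y \in Z\} \cup \{x \wedge y^c : x,y\in Z\}$. A proper $\mathcal{R}$-filtration of a Boolean algebra $\mathcal{A}$ is a sequence $(Z_n)_{n\in\omega}$ of subsets with $Z_n \subsetneq Z_{n+1}$, $\mathcal{R}(Z_n)\subseteq Z_{n+1}$, and $\bigcup_n Z_n = \mathcal{A}$. *)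

(* a Boolean algebra is a complemented distributive lattice
   with top and bottom, i.e. a [ctbDistrLatticeType]. *)
From mathcomp Require Import all_boot all_order.
Set Implicit Arguments. Unset Strict Implicit. Unset Printing Implicit Defensive.
Import Order.TTheory.
Local Open Scope order_scope.

Section BA.
Context {disp : Order.disp_t} {A : ctbDistrLatticeType disp}.

Definition Rclos (Z : A -> Prop) (z : A) : Prop :=
  Z z \/ z = \bot \/ z = \top \/
  (exists x, Z x /\ z = ~` x) \/
  (exists x y, Z x /\ Z y /\ z = x `|` y) \/
  (exists x y, Z x /\ Z y /\ z = x `&` y) \/
  (exists x y, Z x /\ Z y /\ z = x `&` ~` y).

Definition proper_R_filtration (Z : nat -> A -> Prop) : Prop :=
  (forall n, (forall x, Z n x -> Z n.+1 x) /\ (exists x, Z n.+1 x /\ ~ Z n x)) /\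
  (forall n x, Rclos (Z n) x -> Z n.+1 x) /\
  (forall x : A, exists n, Z n x).

Definition is_min_level (Z : nat -> A -> Prop) (x : A) (n : nat) : Prop :=
  Z n x /\ (forall m, Z m x -> (n <= m)%N).
End BA.

(** Call [b] unbounded when the level function [f] is unbounded on the
   elements below [b]; [\top] is unbounded because the filtration is proper.
   Since [f (x `|` y)] and [f (x `&` ~` y)] exceed [maxn (f x) (f y)] by at
   most one, if [a `|` c] is unbounded then so is [a] or [c]. From an
   unbounded [b] we can therefore split off some [a <= b] of arbitrarily large
   level with [b `&` ~` a] still unbounded, and iterating this inside the
   remainders yields pairwise disjoint elements of strictly increasing level. *)

From mathcomp Require Import all_boot all_order.
From Stdlib Require Import Classical ClassicalEpsilon.
Local Open Scope order_scope.
Import Order.Theory.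

Section Peeling.
Context {disp : Order.disp_t} {A : ctbDistrLatticeType disp}.

Lemma peeled_disjoint (a b : nat -> A) :
    (forall n, a n <= b n) -> (forall n, b n.+1 = b n `&` ~` a n) ->
  forall m n, m <> n -> a n `&` a m = \bot.
Proof.
move=> ab bS.
have b_nonincr : {homo b : i j / (i <= j)%N >-> j <= i}.
  apply: homo_leq => [x|y x z yx zy|i]; first exact: lexx.
    exact: le_trans zy yx.
  by rewrite bS leIl.
suff lt_disj m n : (m < n)%N -> a n `&` a m = \bot.
  by move=> m n /eqP; rewrite neq_ltn => /orP[/lt_disj|/lt_disj]; rewrite 1?meetC.
move=> lt_mn; apply/eqP; rewrite disj_leC.
by rewrite (le_trans (ab n)) // (le_trans (b_nonincr _ _ lt_mn)) // bS leIr.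
Qed.

End Peeling.

Section UnboundedLevel.
Context {disp : Order.disp_t} {A : ctbDistrLatticeType disp} (f : A -> nat).
Hypothesis f_join : forall x y, (f (x `|` y) <= (maxn (f x) (f y)).+1)%N.
Hypothesis f_diff : forall x y, (f (x `&` ~` y) <= (maxn (f x) (f y)).+1)%N.
Hypothesis f_unbounded : forall T, exists x, (T < f x)%N.

Definition unbounded_below (b : A) := forall T, exists2 y, y <= b & (T < f y)%N.

Lemma unbounded_below_top : unbounded_below \top.
Proof. by move=> T; have [x] := f_unbounded T; exists x; rewrite ?lex1. Qed.

Lemma bounded_below_join a c M N :
    (forall y, y <= a -> (f y <= M)%N) -> (forall y, y <= c -> (f y <= N)%N) ->
  forall y, y <= a `|` c -> (f y <= (maxn M N).+1)%N.
Proof.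
move=> aM cN y le_y_ac.
have -> : y = (y `&` a) `|` (y `&` ~` a) by rewrite -meetUr joinxC meetx1.
rewrite (leq_trans (f_join _ _)) // ltnS geq_max.
rewrite (leq_trans (aM _ (leIr _ _)) (leq_maxl _ _)) /=.
apply: leq_trans (leq_maxr _ _); apply: cN.
have := leI2 le_y_ac (lexx (~` a)).
by rewrite meetUl meetxC join0x => /le_trans; apply; apply: leIl.
Qed.

Lemma unbounded_below_join a c :
  unbounded_below (a `|` c) -> unbounded_below a \/ unbounded_below c.
Proof.
have bounded b : ~ unbounded_below b -> exists M, forall y, y <= b -> (f y <= M)%N.
  move=> nb; apply: NNPP => nM; apply: nb => T; apply: NNPP => nT.
  by apply: nM; exists T => y le_yb; rewrite leqNgt; apply/negP => ?; apply: nT; exists y.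
move=> ac; apply: NNPP => /not_or_and[/bounded[M aM] /bounded[N cN]].
have [y le_y_ac] := ac (maxn M N).+1.
by rewrite ltnNge (bounded_below_join _ _ _ _ aM cN).
Qed.

Lemma unbounded_below_split b T : unbounded_below b ->
  exists a, [/\ a <= b, (T < f a)%N & unbounded_below (b `&` ~` a)].
Proof.
move=> ub; have [a0 le_a0b big_a0] := ub (maxn (f b) T).+1.
set c := b `&` ~` a0.
have a0_eq : b `&` ~` c = a0.
  by rewrite /c complI complK meetUr meetxC join0x; apply/meet_idPr.
have [ua0|uc] : unbounded_below a0 \/ unbounded_below c.
  by apply: unbounded_below_join; rewrite /c joinIr joinxC meetx1 join_r.
- exists c; split; rewrite ?a0_eq ?leIl //.
  (* [a0 = b `&` ~` c], so a small [f c] would force a small [f a0]. *)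
  rewrite ltnNge; apply/negP => small_c.
  have := f_diff b c; rewrite a0_eq => /(leq_trans big_a0); rewrite ltnS.
  by apply/negP; rewrite -leqNgt geq_max leq_maxl (leq_trans small_c) ?leq_maxr.
- by exists a0; split=> //; apply: leq_ltn_trans big_a0; apply/leqW/leq_maxr.
Qed.

Lemma exists_disjoint_level_increasing : exists a : nat -> A,
  (forall m n, m <> n -> a n `&` a m = \bot) /\ (forall n, (f (a n) < f (a n.+1))%N).
Proof.
pose P (s : A * A) := s.2 <= s.1 /\ unbounded_below (s.1 `&` ~` s.2).
pose R (x y : {s | P s}) :=
  (sval y).1 = (sval x).1 `&` ~` (sval x).2 /\ (f (sval x).2 < f (sval y).2)%N.
have next x : {y | R x y}.
  apply: constructive_indefinite_description.
  case: x => [[b a] Pba]; rewrite /R /=; case: Pba => _ ub.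
  have [a' [le_a' lt_a' ub']] := unbounded_below_split _ (f a) ub.
  by exists (exist P (b `&` ~` a, a') (conj le_a' ub')).
have [a0 [le_a0 _ ub0]] := unbounded_below_split _ 0 unbounded_below_top.
have [s [_ sS]] := dependent_choice next (exist P (\top, a0) (conj le_a0 ub0)).
exists (fun n => (sval (s n)).2); split; last by move=> n; case: (sS n).
apply: (@peeled_disjoint _ _ _ (fun n => (sval (s n)).1)) => n.
  by case: (svalP (s n)).
by case: (sS n).
Qed.

End UnboundedLevel.

Section FiltrationLevel.
Context {disp : Order.disp_t} {A : ctbDistrLatticeType disp}.
Variables (Z : nat -> A -> Prop) (f : A -> nat).
Hypothesis hZ : proper_R_filtration Z.
Hypothesis hf : forall x, is_min_level Z x (f x).

Lemma filtration_mono n m x : (n <= m)%N -> Z n x -> Z m x.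
Proof.
move=> /subnK <-; elim: (m - n)%N => [//|k IH] /IH.
by rewrite addSn; apply: (proj1 (proj1 hZ _)).
Qed.

Lemma mem_level x : Z (f x) x. Proof. exact: (proj1 (hf x)). Qed.

Lemma level_min n x : Z n x -> (f x <= n)%N. Proof. exact: (proj2 (hf x)). Qed.

Lemma level_Rclos x y z : Rclos (Z (maxn (f x) (f y))) z ->
  (f z <= (maxn (f x) (f y)).+1)%N.
Proof. by move=> ?; apply/level_min/(proj1 (proj2 hZ)). Qed.

Lemma mem_level_max x y :
  Z (maxn (f x) (f y)) x /\ Z (maxn (f x) (f y)) y.
Proof.
by split; apply: filtration_mono (mem_level _); rewrite ?leq_maxl ?leq_maxr.
Qed.

Lemma level_join x y : (f (x `|` y) <= (maxn (f x) (f y)).+1)%N.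
Proof.
have [Zx Zy] := mem_level_max x y.
by apply: level_Rclos; do 4 right; left; exists x, y.
Qed.

Lemma level_diff x y : (f (x `&` ~` y) <= (maxn (f x) (f y)).+1)%N.
Proof.
have [Zx Zy] := mem_level_max x y.
by apply: level_Rclos; do 6 right; exists x, y.
Qed.

Lemma level_unbounded T : exists x, (T < f x)%N.
Proof.
have [x [_ nZx]] := proj2 (proj1 hZ T); exists x.
by rewrite ltnNge; apply/negP => /filtration_mono/(_ (mem_level x)).
Qed.

End FiltrationLevel.

Theorem lemma3p7 (disp : Order.disp_t) (A : ctbDistrLatticeType disp)
  (Z : nat -> A -> Prop) (hZ : proper_R_filtration Z)
  (f : A -> nat) (hf : forall x : A, is_min_level Z x (f x)) :
  exists a : nat -> A,
    (forall m n : nat, m <> n -> a n `&` a m = \bot) /\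
    (forall n : nat, (f (a n) < f (a n.+1))%N).
Proof.
apply: exists_disjoint_level_increasing.
- exact: level_join hZ hf.
- exact: level_diff hZ hf.
- exact: level_unbounded hZ hf.
Qed.
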